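(* Let $X$ be a Tychonoff space with $|X|>1$ and let $I\neq J$ be vertices of $\mathbb{AG}(X)$. Then: (a) $d(I,J)=1$ iff $\mathcal{O}(I)\cap\mathcal{O}(J)=\emptyset$; (b) $d(I,J)=2$ iff $\mathcal{O}(I)\cap\mathcal{O}(J)\neq\emptyset$ and $\overline{\mathcal{O}(I)\cup\mathcal{O}(J)}\neq X$; (c) $d(I,J)=3$ iff $\mathcal{O}(I)\cap\mathcal{O}(J)\neq\emptyset$ and $\overline{\mathcal{O}(I)\cup\mathcal{O}(J)}=X$.
   Context: $C(X)$ denotes the ring of all real-valued continuous functions on $X$; $\mathrm{Coz}(f)=\{x: f(x)\neq 0\}$; for $S\subseteq C(X)$, $\mathcal{O}(S)=\bigcup_{f\in S}\mathrm{Coz}(f)$. $\mathbb{A}(X)$ is the set of nonzero ideals $I$ of $C(X)$ for which there is a nonzero ideal $J$ with $IJ=\{0\}$. The annihilating-ideal graph $\mathbb{AG}(X)$ has vertex set $\mathbb{A}(X)$, distinct vertices $I,J$ being adjacent iff $IJ=\{0\}$. $d(I,J)$ is the length of a shortest path between $I$ and $J$. *)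

From Stdlib Require Import Reals.
Open Scope R_scope.

Section Topo.

Variable X : Type.
Variable op : (X -> Prop) -> Prop.

Definition is_topology : Prop :=
  op (fun _ => True) /\ op (fun _ => False) /\
  (forall U V, op U -> op V -> op (fun x => U x /\ V x)) /\
  (forall (F : (X -> Prop) -> Prop),
      (forall U, F U -> op U) -> op (fun x => exists U, F U /\ U x)).

Definition is_closed (A : X -> Prop) : Prop := op (fun x => ~ A x).

Definition R_open (U : R -> Prop) : Prop :=
  forall y, U y -> exists eps, 0 < eps /\ forall z, Rabs (z - y) < eps -> U z.

Definition cont (f : X -> R) : Prop :=
  forall U, R_open U -> op (fun x => U (f x)).

Definition tychonoff : Prop :=
  (forall x : X, is_closed (fun y => y = x)) /\
  (forall (F : X -> Prop) (x : X), is_closed F -> ~ F x ->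
     exists f, cont f /\ (forall y, 0 <= f y <= 1) /\ f x = 0 /\
               (forall y, F y -> f y = 1)).

Definition closure (A : X -> Prop) (x : X) : Prop :=
  forall U, op U -> U x -> exists y, U y /\ A y.

Definition zerof : X -> R := fun _ => 0.

Definition is_ideal (I : (X -> R) -> Prop) : Prop :=
  (forall f, I f -> cont f) /\
  I zerof /\
  (forall f g, I f -> I g -> I (fun x => f x - g x)) /\
  (forall f r, I f -> cont r -> I (fun x => r x * f x)).

Definition nonzero_ideal (I : (X -> R) -> Prop) : Prop :=
  is_ideal I /\ exists f, I f /\ f <> zerof.

Inductive prod_ideal (I J : (X -> R) -> Prop) : (X -> R) -> Prop :=
| prod_zero : prod_ideal I J zerof
| prod_add : forall f g h, I f -> J g -> prod_ideal I J h ->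
    prod_ideal I J (fun x => f x * g x + h x).

Definition prod_is_zero (I J : (X -> R) -> Prop) : Prop :=
  forall h, prod_ideal I J h <-> h = zerof.

Definition is_vertex (I : (X -> R) -> Prop) : Prop :=
  nonzero_ideal I /\ exists J, nonzero_ideal J /\ prod_is_zero I J.

Definition adj (I J : (X -> R) -> Prop) : Prop :=
  is_vertex I /\ is_vertex J /\ I <> J /\ prod_is_zero I J.

Inductive walk : ((X -> R) -> Prop) -> ((X -> R) -> Prop) -> nat -> Prop :=
| walk0 : forall I, walk I I 0
| walkS : forall I K J n, adj I K -> walk K J n -> walk I J (S n).

Definition dist_eq (I J : (X -> R) -> Prop) (n : nat) : Prop :=
  walk I J n /\ forall m, (m < n)%nat -> ~ walk I J m.

Definition Ocoz (S : (X -> R) -> Prop) (x : X) : Prop :=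
  exists f, S f /\ f x <> 0.

End Topo.
Arguments is_topology {X}. Arguments tychonoff {X}. Arguments is_vertex {X}. Arguments dist_eq {X}. Arguments closure {X}. Arguments Ocoz {X}. Arguments cont {X}. Arguments adj {X}. Arguments walk {X}. Arguments is_ideal {X}. Arguments nonzero_ideal {X}. Arguments prod_is_zero {X}. Arguments prod_ideal {X}. Arguments zerof {X}. Arguments is_closed {X}.

(* Two vertices are adjacent exactly when their cozero sets O(I), O(J) are
   disjoint, since fg = 0 for all f in I, g in J says precisely that.  A common
   neighbour K has a nonempty open O(K) missing O(I) and O(J), so a path of
   length 2 exists iff O(I) u O(J) is not dense: conversely, for an open U
   missing O(I) u O(J), complete regularity makes the ideal of functions
   vanishing off U nonzero.  Finally I, J have nonzero annihilators L, M; when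
   O(I) u O(J) is dense, O(L) n O(M) is an open set missing it, hence empty, and
   I - L - M - J is a path of length 3. *)
From Stdlib Require Import Reals Lra Psatz Classical FunctionalExtensionality PropExtensionality.
Open Scope R_scope.

Definition jointly_continuous (h : R -> R -> R) : Prop :=
  forall a b eps, 0 < eps -> exists d, 0 < d /\ forall a' b',
    Rabs (a' - a) < d -> Rabs (b' - b) < d -> Rabs (h a' b' - h a b) < eps.

Lemma Rmult_jointly_continuous : jointly_continuous Rmult.
Proof.
  intros a b eps Heps.
  set (k := Rabs a + Rabs b + 1).
  assert (Hk : 0 < k) by (unfold k; pose proof (Rabs_pos a); pose proof (Rabs_pos b); lra).
  exists (Rmin 1 (eps / k)); split.
  { apply Rmin_glb_lt; [lra | apply Rdiv_lt_0_compat; lra]. }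
  intros a' b' Ha Hb.
  assert (d_le_1 : Rmin 1 (eps / k) <= 1) by apply Rmin_l.
  assert (dk_le : Rmin 1 (eps / k) * k <= eps).
  { pose proof (Rmin_r 1 (eps / k)) as Hr.
    apply (Rmult_le_compat_r k) in Hr; [|lra].
    unfold Rdiv in Hr; rewrite Rmult_assoc, Rinv_l in Hr; lra. }
  set (d := Rmin 1 (eps / k)) in *.
  replace (a' * b' - a * b) with (a' * (b' - b) + (a' - a) * b) by ring.
  pose proof (Rabs_triang (a' * (b' - b)) ((a' - a) * b)) as Htri.
  rewrite !Rabs_mult in Htri.
  assert (Ha' : Rabs a' <= Rabs a + Rabs (a' - a)).
  { replace a' with (a + (a' - a)) at 1 by ring. apply Rabs_triang. }
  pose proof (Rabs_pos (b' - b)). pose proof (Rabs_pos (a' - a)).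
  pose proof (Rabs_pos b). pose proof (Rabs_pos a').
  unfold k in dk_le. nra.
Qed.

Lemma Rminus_jointly_continuous : jointly_continuous Rminus.
Proof.
  intros a b eps Heps. exists (eps / 2); split; [lra|]. intros a' b' Ha Hb.
  replace ((a' - b') - (a - b)) with ((a' - a) + - (b' - b)) by ring.
  pose proof (Rabs_triang (a' - a) (- (b' - b))). rewrite Rabs_Ropp in *. lra.
Qed.

Section CozeroSets.

Variable X : Type.
Variable op : (X -> Prop) -> Prop.
Hypothesis Htop : is_topology op.

Lemma open_ext (U V : X -> Prop) : op U -> (forall x, U x <-> V x) -> op V.
Proof.
  intros HU E. replace V with U; [exact HU|].
  apply functional_extensionality; intro x; apply propositional_extensionality, E.
Qed.

Lemma open_inter (U V : X -> Prop) : op U -> op V -> op (fun x => U x /\ V x).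
Proof. destruct Htop as [_ [_ [Hinter _]]]. apply Hinter. Qed.

Lemma open_of_local (V : X -> Prop) :
  (forall x, V x -> exists W, op W /\ W x /\ forall y, W y -> V y) -> op V.
Proof.
  intros Hloc. destruct Htop as [_ [_ [_ Hunion]]].
  apply open_ext with (fun x => exists W, (op W /\ forall y, W y -> V y) /\ W x).
  - apply (Hunion (fun W => op W /\ forall y, W y -> V y)). now intros W [].
  - intro x; split.
    + intros [W [[_ HWV] Wx]]. auto.
    + intros Vx. destruct (Hloc x Vx) as [W [HW [Wx HWV]]]. eauto.
Qed.

Lemma open_preimage_ball (f : X -> R) (c d : R) :
  cont op f -> op (fun y => Rabs (f y - c) < d).
Proof.
  intros Hf. apply (Hf (fun z => Rabs (z - c) < d)). intros z Hz.
  exists (d - Rabs (z - c)); split; [lra|]. intros w Hw.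
  replace (w - c) with ((w - z) + (z - c)) by ring.
  pose proof (Rabs_triang (w - z) (z - c)). lra.
Qed.

Lemma cont_binop (h : R -> R -> R) (f g : X -> R) :
  jointly_continuous h -> cont op f -> cont op g -> cont op (fun x => h (f x) (g x)).
Proof.
  intros Hh Hf Hg U HU. apply open_of_local. intros x Ux.
  destruct (HU _ Ux) as [eps [Heps HUeps]].
  destruct (Hh (f x) (g x) eps Heps) as [d [Hd Hhd]].
  exists (fun y => Rabs (f y - f x) < d /\ Rabs (g y - g x) < d); split; [|split].
  - apply open_inter; apply open_preimage_ball; assumption.
  - rewrite !Rminus_diag, Rabs_R0. auto.
  - intros y [Hfy Hgy]. apply HUeps, Hhd; assumption.
Qed.

Lemma cont_mul (f g : X -> R) : cont op f -> cont op g -> cont op (fun x => f x * g x).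
Proof. apply cont_binop, Rmult_jointly_continuous. Qed.

Lemma cont_sub (f g : X -> R) : cont op f -> cont op g -> cont op (fun x => f x - g x).
Proof. apply cont_binop, Rminus_jointly_continuous. Qed.

Lemma cont_const (c : R) : cont op (fun _ : X => c).
Proof.
  intros U _. destruct Htop as [Hfull [Hempty _]].
  destruct (classic (U c)).
  - apply open_ext with (fun _ => True); [exact Hfull | tauto].
  - apply open_ext with (fun _ => False); [exact Hempty | tauto].
Qed.

Lemma Ocoz_open (I : (X -> R) -> Prop) : is_ideal op I -> op (Ocoz I).
Proof.
  intros [Hcont _]. apply open_of_local. intros x [f [If fx]].
  exists (fun y => f y <> 0); split; [|split; [exact fx | intros y Hy; exists f; auto]].
  apply (Hcont f If (fun z => z <> 0)). intros z Hz.
  exists (Rabs z); split; [now apply Rabs_pos_lt|].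
  intros w Hw ->. rewrite Rminus_0_l, Rabs_Ropp in Hw. lra.
Qed.

Lemma Ocoz_inhabited (I : (X -> R) -> Prop) : nonzero_ideal op I -> exists x, Ocoz I x.
Proof.
  intros [_ [f [If fnz]]]. apply NNPP; intro Hempty. apply fnz.
  apply functional_extensionality; intro x.
  apply NNPP; intro fx. apply Hempty. exists x, f. auto.
Qed.

Definition coz_disjoint (I J : (X -> R) -> Prop) : Prop :=
  forall x, ~ (Ocoz I x /\ Ocoz J x).

Lemma coz_disjoint_sym (I J : (X -> R) -> Prop) : coz_disjoint I J -> coz_disjoint J I.
Proof. intros D x [Ix Jx]. exact (D x (conj Jx Ix)). Qed.

Lemma not_coz_disjoint (I J : (X -> R) -> Prop) :
  ~ coz_disjoint I J <-> exists x, Ocoz I x /\ Ocoz J x.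
Proof.
  split.
  - intros ND. apply NNPP; intro Hno. apply ND. intros x Hx. eauto.
  - intros [x Hx] D. exact (D x Hx).
Qed.

Lemma prod_is_zero_iff_coz_disjoint (I J : (X -> R) -> Prop) :
  prod_is_zero I J <-> coz_disjoint I J.
Proof.
  split.
  - intros Hzero x [[f [If fx]] [g [Jg gx]]].
    assert (Hfg : prod_ideal I J (fun y => f y * g y + zerof y))
      by (apply prod_add; auto using prod_zero).
    apply Hzero, (f_equal (fun k => k x)) in Hfg. unfold zerof in Hfg.
    destruct (Rmult_integral (f x) (g x)); [lra | auto | auto].
  - intros D h; split.
    + induction 1 as [|f g h If Jg _ IH]; [reflexivity|].
      apply functional_extensionality; intro x. rewrite IH. unfold zerof.
      destruct (Req_dec (f x) 0) as [-> | fx]; [ring|].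
      destruct (Req_dec (g x) 0) as [-> | gx]; [ring|].
      exfalso. apply (D x). split; [exists f | exists g]; auto.
    + intros ->. apply prod_zero.
Qed.

Lemma is_vertex_of_coz_disjoint (I J : (X -> R) -> Prop) :
  nonzero_ideal op I -> nonzero_ideal op J -> coz_disjoint I J -> is_vertex op I.
Proof.
  intros NI NJ D. split; [exact NI|].
  exists J. split; [exact NJ | now apply prod_is_zero_iff_coz_disjoint].
Qed.

Lemma adj_iff_coz_disjoint (I J : (X -> R) -> Prop) :
  is_vertex op I -> is_vertex op J -> adj op I J <-> coz_disjoint I J.
Proof.
  intros VI VJ. split.
  - intros [_ [_ [_ Hzero]]]. now apply prod_is_zero_iff_coz_disjoint.
  - intros D. split; [exact VI | split; [exact VJ | split]].
    + intros <-. destruct (Ocoz_inhabited I (proj1 VI)) as [x Ix]. exact (D x (conj Ix Ix)).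
    + now apply prod_is_zero_iff_coz_disjoint.
Qed.

Definition vanishing_off (U : X -> Prop) (h : X -> R) : Prop :=
  cont op h /\ forall y, ~ U y -> h y = 0.

Lemma vanishing_off_ideal (U : X -> Prop) : is_ideal op (vanishing_off U).
Proof.
  split; [|split; [|split]].
  - now intros h [].
  - split; [apply cont_const | reflexivity].
  - intros h k [Hh Hh0] [Hk Hk0]. split; [now apply cont_sub|].
    intros y Uy. rewrite Hh0, Hk0 by exact Uy. ring.
  - intros h r [Hh Hh0] Hr. split; [now apply cont_mul|].
    intros y Uy. rewrite Hh0 by exact Uy. ring.
Qed.

Lemma vanishing_off_nonzero (U : X -> Prop) (x : X) :
  tychonoff op -> op U -> U x -> nonzero_ideal op (vanishing_off U).
Proof.
  intros [_ Hcreg] HU Ux.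
  assert (Hclosed : is_closed op (fun y => ~ U y))
    by (apply open_ext with U; [exact HU | intro y; split; [tauto | apply NNPP]]).
  destruct (Hcreg _ x Hclosed (fun nUx => nUx Ux)) as [f [Hf [_ [fx f1]]]].
  split; [apply vanishing_off_ideal|].
  exists (fun y => 1 - f y). split.
  - split; [exact (cont_sub _ _ (cont_const 1) Hf)|].
    intros y nUy. rewrite f1 by exact nUy. ring.
  - intro E. apply (f_equal (fun k => k x)) in E. unfold zerof in E. lra.
Qed.

Lemma Ocoz_vanishing_off (U : X -> Prop) (y : X) : Ocoz (vanishing_off U) y -> U y.
Proof. intros [h [[_ Hh0] hy]]. apply NNPP. intro nUy. exact (hy (Hh0 y nUy)). Qed.

Lemma walk0_eq (I J : (X -> R) -> Prop) : walk op I J 0 -> I = J.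
Proof. now inversion 1. Qed.

Lemma walk1_adj (I J : (X -> R) -> Prop) : walk op I J 1 -> adj op I J.
Proof. inversion 1 as [|? K ? ? A W]; subst. now apply walk0_eq in W as <-. Qed.

Lemma walk2_adj (I J : (X -> R) -> Prop) :
  walk op I J 2 -> exists K, adj op I K /\ adj op K J.
Proof. inversion 1 as [|? K ? ? A W]; subst. apply walk1_adj in W. eauto. Qed.

Lemma walk_of_adj (I J : (X -> R) -> Prop) : adj op I J -> walk op I J 1.
Proof. intros A. apply walkS with J; [exact A | apply walk0]. Qed.

Definition dense (A : X -> Prop) : Prop := forall x, closure op A x.

Lemma walk1_iff_coz_disjoint (I J : (X -> R) -> Prop) :
  is_vertex op I -> is_vertex op J -> walk op I J 1 <-> coz_disjoint I J.
Proof.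
  intros VI VJ. rewrite <- adj_iff_coz_disjoint by assumption.
  split; [apply walk1_adj | apply walk_of_adj].
Qed.

Lemma walk2_iff_not_dense (I J : (X -> R) -> Prop) :
  tychonoff op -> is_vertex op I -> is_vertex op J ->
  walk op I J 2 <-> ~ dense (fun y => Ocoz I y \/ Ocoz J y).
Proof.
  intros Hty VI VJ. split.
  - intros W Hdense. destruct (walk2_adj I J W) as [K [AIK AKJ]].
    assert (VK : is_vertex op K) by apply AIK.
    apply adj_iff_coz_disjoint in AIK; [|assumption..].
    apply adj_iff_coz_disjoint in AKJ; [|assumption..].
    destruct (Ocoz_inhabited K (proj1 VK)) as [x Kx].
    destruct (Hdense x (Ocoz K) (Ocoz_open K (proj1 (proj1 VK))) Kx)
      as [y [Ky [Iy | Jy]]].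
    + exact (AIK y (conj Iy Ky)).
    + exact (AKJ y (conj Ky Jy)).
  - intros Hnd.
    apply not_all_ex_not in Hnd as [x Hx].
    apply not_all_ex_not in Hx as [U Hx].
    apply imply_to_and in Hx as [HU Hx].
    apply imply_to_and in Hx as [Ux HUmiss].
    set (K := vanishing_off U).
    assert (NK : nonzero_ideal op K) by (apply (vanishing_off_nonzero U x); assumption).
    assert (DKI : coz_disjoint K I)
      by (intros y [Ky Iy]; apply HUmiss; exists y; split; [now apply Ocoz_vanishing_off | now left]).
    assert (DKJ : coz_disjoint K J)
      by (intros y [Ky Jy]; apply HUmiss; exists y; split; [now apply Ocoz_vanishing_off | now right]).
    assert (VK : is_vertex op K) by (apply (is_vertex_of_coz_disjoint K I); [exact NK | apply VI | exact DKI]).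
    apply walkS with K.
    + apply adj_iff_coz_disjoint; [assumption.. | now apply coz_disjoint_sym].
    + now apply walk_of_adj, adj_iff_coz_disjoint.
Qed.

Lemma walk3_of_dense (I J : (X -> R) -> Prop) :
  is_vertex op I -> is_vertex op J ->
  dense (fun y => Ocoz I y \/ Ocoz J y) -> walk op I J 3.
Proof.
  intros VI VJ Hdense.
  destruct VI as [NI [L [NL ZIL]]], VJ as [NJ [M [NM ZJM]]].
  apply prod_is_zero_iff_coz_disjoint in ZIL.
  apply prod_is_zero_iff_coz_disjoint in ZJM.
  assert (VI : is_vertex op I) by now apply (is_vertex_of_coz_disjoint I L).
  assert (VJ : is_vertex op J) by now apply (is_vertex_of_coz_disjoint J M).
  assert (VL : is_vertex op L) by (apply (is_vertex_of_coz_disjoint L I); auto using coz_disjoint_sym).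
  assert (VM : is_vertex op M) by (apply (is_vertex_of_coz_disjoint M J); auto using coz_disjoint_sym).
  assert (DLM : coz_disjoint L M).
  { intros x [Lx Mx].
    assert (HLM : op (fun y => Ocoz L y /\ Ocoz M y))
      by (apply open_inter; apply Ocoz_open; [apply NL | apply NM]).
    destruct (Hdense x _ HLM (conj Lx Mx)) as [y [[Ly My] [Iy | Jy]]].
    - exact (ZIL y (conj Iy Ly)).
    - exact (ZJM y (conj Jy My)). }
  apply walkS with L; [now apply adj_iff_coz_disjoint|].
  apply walkS with M; [now apply adj_iff_coz_disjoint|].
  apply walk_of_adj, adj_iff_coz_disjoint; auto using coz_disjoint_sym.
Qed.

End CozeroSets.

Theorem mainTheorem9 (X : Type) (op : (X -> Prop) -> Prop)
  (Htop : is_topology op) (Hty : tychonoff op)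
  (Hcard : exists x y : X, x <> y)
  (I J : (X -> R) -> Prop)
  (HI : is_vertex op I) (HJ : is_vertex op J) (HIJ : I <> J) :
  (dist_eq op I J 1 <->
     (forall x, ~ (Ocoz I x /\ Ocoz J x))) /\
  (dist_eq op I J 2 <->
     ((exists x, Ocoz I x /\ Ocoz J x) /\
      ~ (forall x, closure op (fun y => Ocoz I y \/ Ocoz J y) x))) /\
  (dist_eq op I J 3 <->
     ((exists x, Ocoz I x /\ Ocoz J x) /\
      (forall x, closure op (fun y => Ocoz I y \/ Ocoz J y) x))).
Proof.
  pose proof (walk1_iff_coz_disjoint X op I J HI HJ) as W1.
  pose proof (walk2_iff_not_dense X op Htop I J Hty HI HJ) as W2.
  pose proof (walk3_of_dense X op Htop I J HI HJ) as W3.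
  pose proof (not_coz_disjoint X I J) as Meet.
  assert (W0 : ~ walk op I J 0) by (intros W; exact (HIJ (walk0_eq X op I J W))).
  unfold dist_eq, dense, coz_disjoint in *.
  split; [|split]; split.
  - intros [W _]. now apply W1.
  - intros D. split; [now apply W1 | intros [|m] Hm; [exact W0 | lia]].
  - intros [W Hm]. split; [apply Meet; intro D; apply (Hm 1%nat); [lia | now apply W1] | now apply W2].
  - intros [E Hnd]. split; [now apply W2|].
    intros [|[|m]] Hm; [exact W0 | rewrite W1; now apply Meet | lia].
  - intros [W Hm]. split.
    + apply Meet; intro D. apply (Hm 1%nat); [lia | now apply W1].
    + apply NNPP; intro Hnd. apply (Hm 2%nat); [lia | now apply W2].
  - intros [E Hdense]. split; [now apply W3|].
    intros [|[|[|m]]] Hm; [exact W0 | rewrite W1; now apply Meet | rewrite W2; tauto | lia].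
Qed.
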